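(* Let $L$ be a factorial $W^*$-lattice of type $I_n$. Then $|Min(L)|=|\mathbb R|$.
   Context: Orthocomplemented lattice (paper's convention): a set $L$ with a partial order $\le$ in which every subset has a supremum and an infimum ($l\vee l'$, $l\wedge l'$ denote binary sup/inf, $0=\inf L$, $1=\sup L$), such that: (continuity) for every increasing net $(l_i)$ and every $l$, $\bigvee_i(l\wedge l_i)=l\wedge\bigvee_i l_i$, and for every decreasing net $(l_i)$ and every $l$, $\bigwedge_i(l\vee l_i)=l\vee\bigwedge_i l_i$; (modularity) $l\le l''$ implies $(l\vee l')\wedge l''=l\vee(l'\wedge l'')$ for all $l'$; together with a map $l\mapsto l^\perp$, also written $1-l$, satisfying $l^{\perp\perp}=l$, $l\vee l^\perp=1$, $l\wedge l^\perp=0$, and $l\le l'\Rightarrow l'^\perp\le l^\perp$. For $l'\le l$ put $l-l'=(1-l')\wedge l$. Write $\perp(l)=\{l'\in L: l'\le 1-l\}$; elements of $\perp(l)$ are orthogonal to $l$; a family is mutually orthogonal if any two distinct members are orthogonal. $l$ commutes with $l'$ if $l=(l\wedge l')\vee(l\wedge l'^\perp)$; $c(l)$ is the set of elements commuting with $l$; $C(L)=\bigcap_{l\in L}c(l)$. $L$ is factorial if $C(L)=\{0,1\}$ and abelian if $C(L)=L$. For $l\in L$, $L\wedge l=\{l'\in L:l'\le l\}$ is an orthocomplemented lattice with complement $l'\mapsto l-l'$; $l$ is an abelian element if $L\wedge l$ is abelian. $L$ is an R-lattice if $C(L\wedge l)=\{c\wedge l: c\in C(L)\}$ for every $l\in L$.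 An element $l\ne 0$ is minimal if for every $l'\in L$ either $l\wedge l'=0$ or $l\wedge l'=l$; $Min(L)$ is the set of minimal elements and $Min(l)=\{m\in Min(L): m\le l\}$. Regular equivalence relation: for an equivalence relation $\sim$ on $L$ write $l\le_\sim l'$ if there is $l''\le l'$ with $l\sim l''$. $\sim$ is regular if: (1) $l\sim 0\iff l=0$; (2) $l\ge l'$ and $l\le_\sim l'$ imply $l\sim l'$; (3) for all $l,l'$, $l\le_\sim l'$ or $l'\le_\sim l$; (4) if $(l_i)$, $(l_i')$ are families of mutually orthogonal elements with $l_i\sim l_i'$ for all $i$, then $\bigvee_i l_i\sim\bigvee_i l_i'$; (5) $l'\le l$ and $l'\sim l$ imply $l'=l$. A family $(l_i)_{i\in I}$ is independent if for every partition $\{J,K\}$ of $I$, $\bigvee_{i\in J}l_i\wedge\bigvee_{i\in K}l_i=0$. A $\sim$-compatible dimension function is a map $D:L\to[0,1]$ with $D(0)=0$, $D(1)=1$, $D(l\vee l')+D(l\wedge l')=D(l)+D(l')$, $D(l)=D(l')\iff l\sim l'$, $D(l)\le D(l')\iff l\le_\sim l'$, and $D(\bigvee_i l_i)=\sum_i D(l_i)$ for every finite or countable independent family. A factorial R-lattice $L$ is of type $I_n$ if it carries a regular equivalence relation $\sim$ and a $\sim$-compatible dimension function $D$ with $D(L)=\{0,\frac1n,\dots,\frac{n-1}{n},1\}$. A factorial $W^*$-lattice of type $I_n$ is a factorial R-lattice of type $I_n$ whose cardinality equals that of $\mathbb R$. *)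

From Stdlib Require Import Reals List.

Set Implicit Arguments.

Record OLData : Type := mkOL {
  carrier :> Type;
  le : carrier -> carrier -> Prop;
  sup : (carrier -> Prop) -> carrier;
  inf : (carrier -> Prop) -> carrier;
  compl : carrier -> carrier
}.

Section OL.
Variable L : OLData.

Definition join (a b : L) : L := sup L (fun x => x = a \/ x = b).
Definition meet (a b : L) : L := inf L (fun x => x = a \/ x = b).
Definition bot : L := inf L (fun _ => True).
Definition top : L := sup L (fun _ => True).
Definition fam_sup {I : Type} (f : I -> L) : L := sup L (fun x => exists i, x = f i).
Definition fam_inf {I : Type} (f : I -> L) : L := inf L (fun x => exists i, x = f i).

Definition directed (I : Type) (r : I -> I -> Prop) : Prop :=
  inhabited I /\ (forall i, r i i) /\ (forall i j k, r i j -> r j k -> r i k) /\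
  (forall i j, exists k, r i k /\ r j k).

Definition is_partial_order : Prop :=
  (forall a, le L a a) /\
  (forall a b, le L a b -> le L b a -> a = b) /\
  (forall a b c, le L a b -> le L b c -> le L a c).

Definition is_complete : Prop :=
  (forall (S : L -> Prop) x, S x -> le L x (sup L S)) /\
  (forall (S : L -> Prop) u, (forall x, S x -> le L x u) -> le L (sup L S) u) /\
  (forall (S : L -> Prop) x, S x -> le L (inf L S) x) /\
  (forall (S : L -> Prop) u, (forall x, S x -> le L u x) -> le L u (inf L S)).

Definition is_continuous : Prop :=
  (forall (I : Type) (r : I -> I -> Prop) (f : I -> L),
     directed r -> (forall i j, r i j -> le L (f i) (f j)) ->
     forall l, fam_sup (fun i => meet l (f i)) = meet l (fam_sup f)) /\
  (forall (I : Type) (r : I -> I -> Prop) (f : I -> L),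
     directed r -> (forall i j, r i j -> le L (f j) (f i)) ->
     forall l, fam_inf (fun i => join l (f i)) = join l (fam_inf f)).

Definition is_modular : Prop :=
  forall a b c, le L a c -> meet (join a b) c = join a (meet b c).

Definition is_orthocomplement : Prop :=
  (forall a, compl L (compl L a) = a) /\
  (forall a, join a (compl L a) = top) /\
  (forall a, meet a (compl L a) = bot) /\
  (forall a b, le L a b -> le L (compl L b) (compl L a)).

Definition is_ortho_lattice : Prop :=
  is_partial_order /\ is_complete /\ is_continuous /\ is_modular /\ is_orthocomplement.

Definition orthogonal (a b : L) : Prop := le L b (compl L a).

Definition commutes (a b : L) : Prop := a = join (meet a b) (meet a (compl L b)).

Definition central (c : L) : Prop := forall l, commutes c l.

Definition factorial : Prop := forall c, central c <-> (c = bot \/ c = top).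

Definition ldiff (l l' : L) : L := meet (compl L l') l.

(* a \in C(L /\ l): a <= l commutes (in L /\ l, with complement l' |-> l - l')
   with every b <= l *)
Definition central_in (l a : L) : Prop :=
  le L a l /\ forall b, le L b l -> a = join (meet a b) (meet a (ldiff l b)).

Definition R_lattice : Prop :=
  forall l a, central_in l a <-> exists c, central c /\ a = meet c l.

Definition minimal (m : L) : Prop :=
  m <> bot /\ forall l, meet m l = bot \/ meet m l = m.

Definition le_sim (sim : L -> L -> Prop) (a b : L) : Prop :=
  exists c, le L c b /\ sim a c.

Definition mutually_orthogonal {I : Type} (f : I -> L) : Prop :=
  forall i j, i <> j -> orthogonal (f i) (f j).

Definition regular (sim : L -> L -> Prop) : Prop :=
  (forall a, sim a a) /\ (forall a b, sim a b -> sim b a) /\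
  (forall a b c, sim a b -> sim b c -> sim a c) /\
  (forall a, sim a bot <-> a = bot) /\
  (forall a b, le L b a -> le_sim sim a b -> sim a b) /\
  (forall a b, le_sim sim a b \/ le_sim sim b a) /\
  (forall (I : Type) (f g : I -> L), mutually_orthogonal f -> mutually_orthogonal g ->
     (forall i, sim (f i) (g i)) -> sim (fam_sup f) (fam_sup g)) /\
  (forall a b, le L b a -> sim b a -> b = a).

Definition independent {I : Type} (f : I -> L) : Prop :=
  forall J : I -> Prop,
    meet (sup L (fun x => exists i, J i /\ x = f i))
         (sup L (fun x => exists i, ~ J i /\ x = f i)) = bot.

(* finite or countable index type *)
Definition countable (I : Type) : Prop :=
  exists e : I -> nat, forall i j, e i = e j -> i = j.

Definition finsum {I : Type} (g : I -> R) (s : list I) : R :=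
  fold_right (fun i acc => (g i + acc)%R) 0%R s.

(* (unordered) sum of a family of nonnegative reals: supremum of finite partial sums *)
Definition has_sum {I : Type} (g : I -> R) (r : R) : Prop :=
  is_lub (fun x => exists s, NoDup s /\ x = finsum g s) r.

Definition dimension_function (sim : L -> L -> Prop) (D : L -> R) : Prop :=
  (forall a, (0 <= D a <= 1)%R) /\
  D bot = 0%R /\ D top = 1%R /\
  (forall a b, (D (join a b) + D (meet a b) = D a + D b)%R) /\
  (forall a b, D a = D b <-> sim a b) /\
  (forall a b, (D a <= D b)%R <-> le_sim sim a b) /\
  (forall (I : Type) (f : I -> L), countable I -> independent f ->
     has_sum (fun i => D (f i)) (D (fam_sup f))).

Definition type_I (n : nat) : Prop :=
  exists (sim : L -> L -> Prop) (D : L -> R),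
    regular sim /\ dimension_function sim D /\
    forall r, (exists a, D a = r) <-> exists k, (k <= n)%nat /\ r = (INR k / INR n)%R.

End OL.

Definition same_card (A B : Type) : Prop :=
  exists f : A -> B, (forall x y, f x = f y -> x = y) /\ (forall y, exists x, f x = y).

Definition factorial_R_lattice_type_I (L : OLData) (n : nat) : Prop :=
  is_ortho_lattice L /\ factorial L /\ R_lattice L /\ type_I L n.

Definition factorial_W_lattice_type_I (L : OLData) (n : nat) : Prop :=
  factorial_R_lattice_type_I L n /\ same_card L R.

(* Proof structure.
   - Lattice part: in a lattice of type I_n the dimension function is strictly
     monotone with values in {0, 1/n, ..., 1}, so the strict order is
     well-founded; with orthomodularity this makes every element a finite join
     of minimal elements.  Consequently [L] injects into the finite lists of
     minimal elements, and since [L] is infinite so is the set of minimal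
     elements.
   - Set-theoretic part: an infinite type [X] admits an injection
     [X * X -> X] (Zorn's lemma plus comparability of cardinals), hence an
     injection of the finite lists over [X] into [X].
   - Conclusion: the minimal elements inject into [L], which is equipotent to
     the reals, and the reals inject into [L], hence into lists of minimal
     elements, hence into the minimal elements; Cantor-Bernstein concludes. *)

From Stdlib Require Import Reals List.
From Stdlib Require Import Classical ClassicalEpsilon ProofIrrelevance.
From Stdlib Require Import FunctionalExtensionality PropExtensionality Arith Lia Cantor.
From Stdlib Require FinFun.
From mathcomp Require classical_sets cardinality.
Set Bullet Behavior "Strict Subproofs".

Definition incl_s {U : Type} (S T : U -> Prop) : Prop := forall u, S u -> T u.
Definition union_s {U : Type} (C : (U -> Prop) -> Prop) : U -> Prop :=
  fun u => exists S, C S /\ S u.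
Definition chain_s {U : Type} (C : (U -> Prop) -> Prop) : Prop :=
  forall S T, C S -> C T -> incl_s S T \/ incl_s T S.

Lemma set_ext {U : Type} (S T : U -> Prop) : incl_s S T -> incl_s T S -> S = T.
Proof.
  intros h1 h2; apply functional_extensionality; intro u;
  apply propositional_extensionality; split; auto.
Qed.

Lemma union_chain_two {U : Type} (C : (U -> Prop) -> Prop) u1 u2 :
  chain_s C -> union_s C u1 -> union_s C u2 -> exists S, C S /\ S u1 /\ S u2.
Proof.
  intros ch [S1 [C1 h1]] [S2 [C2 h2]].
  destruct (ch S1 S2 C1 C2) as [h|h]; [exists S2 | exists S1]; auto.
Qed.

(* Zorn's lemma for families of sets containing a given set [S0] and closed
   under unions of non-empty chains, derived from the library's [Zorn_bigcup]
   (which also asks for closure under the empty union). *)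
Lemma zorn_sets (U : Type) (F : (U -> Prop) -> Prop) (S0 : U -> Prop) :
  F S0 ->
  (forall C, (exists S, C S) -> (forall S, C S -> F S) -> chain_s C -> F (union_s C)) ->
  exists M, F M /\ forall S, F S -> incl_s M S -> incl_s S M.
Proof.
  intros FS0 Fchain.
  set (empty := fun _ : U => False).
  destruct (@classical_sets.Zorn_bigcup U (fun S : U -> Prop => F S \/ S = empty))
    as [M [FM Mmax]].
  - intros C hC ch.
    destruct (classic (exists S, C S /\ F S)) as [[S [CS FS]]|none].
    + left. replace (classical_sets.bigcup C (fun X => X))
        with (union_s (fun S => C S /\ F S)).
      * apply Fchain; [eauto|tauto|intros A B [CA _] [CB _]; apply ch; auto].
      * apply set_ext.
        -- intros u [A [[hA _] hu]]; exists A; auto.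
        -- intros u [A hA hu]; exists A; split; auto.
           destruct (hC A hA) as [h|h]; auto. subst; destruct hu.
    + right. apply set_ext; [|intros u []].
      intros u [A hA hu]. destruct (hC A hA) as [h|h]; [exfalso; eauto|subst; exact hu].
  - assert (FM' : F M).
    { destruct FM as [h|e]; auto. subst M.
      replace empty with S0; auto. apply NNPP; intro ne.
      apply (Mmax S0); auto. split; [intros u []|intro sub; apply ne].
      apply set_ext; auto; intros u []. }
    exists M; split; auto. intros S FS sub u Su.
    apply NNPP; intro nu. apply (Mmax S); [split; auto|left; auto].
Qed.

Lemma card_le_of_inj (T U : Type) (f : T -> U) :
  (forall x y, f x = f y -> x = y) ->
  is_true (cardinality.card_le (classical_sets.setT : classical_sets.set T)
                               (classical_sets.setT : classical_sets.set U)).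
Proof.
  intro finj.
  apply (@cardinality.card_le_trans _ _ _ (classical_sets.image classical_sets.setT f)).
  - apply (cardinality.card_eqPle _ _).
    apply cardinality.inj_card_eq. intros x y _ _; apply finj.
  - apply cardinality.subset_card_le. intros u _. exact I.
Qed.

Lemma cantor_bernstein (A B : Type) (f : A -> B) (g : B -> A) :
  (forall x y, f x = f y -> x = y) -> (forall x y, g x = g y -> x = y) ->
  same_card A B.
Proof.
  intros finj ginj.
  destruct (ssrbool.elimT cardinality.card_bijP
    (cardinality.Cantor_Bernstein (card_le_of_inj _ _ f finj) (card_le_of_inj _ _ g ginj)))
    as [h [hinv hK Kh]].
  exists (fun a => proj1_sig (h (exist _ a (classical_sets.in_setT a)))).
  split.
  - intros x y e.
    apply eq_sig_hprop in e; [|intros; apply proof_irrelevance].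
    apply (f_equal hinv) in e. rewrite !hK in e.
    exact (f_equal (@proj1_sig _ _) e).
  - intro b. exists (proj1_sig (hinv (exist _ b (classical_sets.in_setT b)))).
    replace (exist _ _ _) with (hinv (exist _ b (classical_sets.in_setT b))).
    + rewrite Kh. reflexivity.
    + apply eq_sig_hprop; [intros; apply proof_irrelevance|reflexivity].
Qed.

(* Comparability of cardinals, for two subsets [P] and [Q] of a type: one
   embeds into the other.  Proof: a maximal partial injection from [P] to [Q]
   (Zorn) is total on [P] or onto [Q]. *)
Section Comparability.
Variable X : Type.
Variables P Q : X -> Prop.

Definition partial_injection (H : X * X -> Prop) : Prop :=
  (forall x y, H (x, y) -> P x /\ Q y) /\
  (forall x y y', H (x, y) -> H (x, y') -> y = y') /\
  (forall x x' y, H (x, y) -> H (x', y) -> x = x').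

Lemma partial_injection_chain C :
  (forall H, C H -> partial_injection H) -> chain_s C -> partial_injection (union_s C).
Proof.
  intros hC ch. split; [|split].
  - intros x y [H [CH h]]. apply (proj1 (hC H CH)); auto.
  - intros x y y' u1 u2. destruct (union_chain_two C _ _ ch u1 u2) as [H [CH [a b]]].
    apply (proj1 (proj2 (hC H CH)) x y y'); auto.
  - intros x x' y u1 u2. destruct (union_chain_two C _ _ ch u1 u2) as [H [CH [a b]]].
    apply (proj2 (proj2 (hC H CH)) x x' y); auto.
Qed.

Lemma partial_injection_add H x0 y0 :
  partial_injection H -> P x0 -> Q y0 ->
  (forall y, ~ H (x0, y)) -> (forall x, ~ H (x, y0)) ->
  partial_injection (fun p => H p \/ p = (x0, y0)).
Proof.
  intros [H1 [H2 H3]] px0 qy0 nx0 ny0. split; [|split].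
  - intros x y [h|h]; [apply H1; auto|inversion h; subst; auto].
  - intros x y y' [h|h] [h'|h'].
    + apply (H2 x); auto.
    + inversion h'; subst. destruct (nx0 y h).
    + inversion h; subst. destruct (nx0 y' h').
    + inversion h; inversion h'; subst; auto.
  - intros x x' y [h|h] [h'|h'].
    + apply (H3 x x' y); auto.
    + inversion h'; subst. destruct (ny0 x h).
    + inversion h; subst. destruct (ny0 x' h').
    + inversion h; inversion h'; subst; auto.
Qed.

Lemma comparability :
  (exists j : X -> X, (forall x, P x -> Q (j x)) /\
      forall x y, P x -> P y -> j x = j y -> x = y) \/
  (exists j : X -> X, (forall x, Q x -> P (j x)) /\
      forall x y, Q x -> Q y -> j x = j y -> x = y).
Proof.
  destruct (zorn_sets (X * X) partial_injection (fun _ => False)) as [H [HH Hmax]].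
  - split; [|split]; intros; contradiction.
  - intros C _ hC ch. apply partial_injection_chain; auto.
  - destruct HH as [H1 [H2 H3]].
    destruct (classic (forall x, P x -> exists y, H (x, y))) as [hP|hP];
    [|destruct (classic (forall y, Q y -> exists x, H (x, y))) as [hQ|hQ]].
    + left. destruct (choice (fun x y => P x -> H (x, y))) as [j hj].
      { intro x. destruct (classic (P x)) as [px|px]; [|exists x; tauto].
        destruct (hP x px) as [y hy]; eauto. }
      exists j; split; [intros x px; apply (H1 x), hj; auto|].
      intros x y px py e. apply (H3 x y (j x)); [auto|rewrite e]; auto.
    + right. destruct (choice (fun y x => Q y -> H (x, y))) as [j hj].
      { intro y. destruct (classic (Q y)) as [qy|qy]; [|exists y; tauto].
        destruct (hQ y qy) as [x hx]; eauto. }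
      exists j; split; [intros y qy; apply (H1 _ y), hj; auto|].
      intros x y qx qy e. apply (H2 (j x) x y); [auto|rewrite e]; auto.
    + exfalso.
      apply not_all_ex_not in hP; destruct hP as [x0 hx0].
      apply imply_to_and in hx0; destruct hx0 as [px0 nx0].
      apply not_all_ex_not in hQ; destruct hQ as [y0 hy0].
      apply imply_to_and in hy0; destruct hy0 as [qy0 ny0].
      apply nx0; exists y0. apply (Hmax (fun p => H p \/ p = (x0, y0))).
      * apply partial_injection_add; [split; auto|auto|auto|eauto|eauto].
      * intros p hp; left; auto.
      * right; auto.
Qed.
End Comparability.

(* Proof: by Zorn, take a maximal subset
   [A] containing the image of [nu] together with an injection [A * A -> A].
   If [A] embedded into its complement, [A] could be enlarged by a disjoint
   copy of itself; hence the complement embeds into [A], so [X] embeds into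
   [A] and the pairing on [A] transports to [X]. *)
Section InfiniteSquare.
Variable X : Type.
Variable nu : nat -> X.
Hypothesis nu_inj : forall i j, nu i = nu j -> i = j.

Definition pairing_on (A : X -> Prop) (f : X -> X -> X) : Prop :=
  (forall k, A (nu k)) /\
  (forall x y, A x -> A y -> A (f x y)) /\
  (forall x y x' y', A x -> A y -> A x' -> A y' -> f x y = f x' y' -> x = x' /\ y = y').

(* The same data given by a graph [G], as needed to apply Zorn's lemma. *)
Record pairing_graph (A : X -> Prop) (G : X -> X -> X -> Prop) : Prop := {
  pg_nat : forall k, A (nu k);
  pg_fun : forall x y z z', G x y z -> G x y z' -> z = z';
  pg_total : forall x y, A x -> A y -> exists z, G x y z;
  pg_range : forall x y z, G x y z -> A x /\ A y /\ A z;
  pg_inj : forall x y x' y' z, G x y z -> G x' y' z -> x = x' /\ y = y' }.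

Definition code (A : X -> Prop) (G : X -> X -> X -> Prop) (u : (X * X * X) + X) : Prop :=
  match u with inl (x, y, z) => G x y z | inr x => A x end.
Definition code_dom (S : (X * X * X) + X -> Prop) (x : X) : Prop := S (inr x).
Definition code_graph (S : (X * X * X) + X -> Prop) (x y z : X) : Prop := S (inl (x, y, z)).
Definition pairing_code (S : (X * X * X) + X -> Prop) : Prop :=
  pairing_graph (code_dom S) (code_graph S).

Lemma graph_of_pairing A f :
  pairing_on A f -> pairing_graph A (fun x y z => A x /\ A y /\ z = f x y).
Proof.
  intros [f_nat [f_range f_inj]]. split; auto.
  - intros x y z z' [_ [_ e]] [_ [_ e']]; congruence.
  - intros x y ax ay; exists (f x y); auto.
  - intros x y z [ax [ay e]]; subst; auto.
  - intros x y x' y' z [ax [ay e]] [ax' [ay' e']]; subst; auto.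
Qed.

Lemma pairing_of_graph A G :
  pairing_graph A G -> exists f, pairing_on A f /\ forall x y z, G x y z -> z = f x y.
Proof.
  intros HG. destruct (choice (fun (p : X * X) z => A (fst p) -> A (snd p) -> G (fst p) (snd p) z))
    as [f0 hf0].
  { intros [x y]. destruct (classic (A x /\ A y)) as [[ax ay]|n].
    - destruct (pg_total _ _ HG x y ax ay) as [z hz]; exists z; auto.
    - exists x; simpl; tauto. }
  set (f := fun x y => f0 (x, y)).
  assert (hf : forall x y, A x -> A y -> G x y (f x y)) by (intros x y ax ay; apply (hf0 (x, y)); auto).
  exists f; split; [split; [|split]|].
  - apply (pg_nat _ _ HG).
  - intros x y ax ay. apply (pg_range _ _ HG x y), hf; auto.
  - intros x y x' y' ax ay ax' ay' e. apply (pg_inj _ _ HG x y x' y' (f x y)); auto.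
    rewrite e; auto.
  - intros x y z h. destruct (pg_range _ _ HG x y z h) as [ax [ay _]].
    apply (pg_fun _ _ HG x y); auto.
Qed.

(* The starting point: Cantor's pairing on the image of [nu]. *)
Definition nat_code : (X * X * X) + X -> Prop :=
  code (fun x => exists k, x = nu k)
       (fun x y z => exists i j, x = nu i /\ y = nu j /\ z = nu (to_nat (i, j))).

Lemma nat_pairing_code : pairing_code nat_code.
Proof.
  split.
  - intro k; exists k; auto.
  - intros x y z z' [i [j [e1 [e2 e3]]]] [i' [j' [e1' [e2' e3']]]]; subst.
    apply nu_inj in e1'; apply nu_inj in e2'; subst; auto.
  - intros x y [i e1] [j e2]. exists (nu (to_nat (i, j))), i, j; auto.
  - intros x y z [i [j [e1 [e2 e3]]]]; split; [exists i|split; [exists j|exists (to_nat (i, j))]]; auto.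
  - intros x y x' y' z [i [j [e1 [e2 e3]]]] [i' [j' [e1' [e2' e3']]]]; subst.
    apply nu_inj, to_nat_inj in e3'. inversion e3'; subst; auto.
Qed.

Lemma pairing_code_chain C :
  (exists S, C S) -> (forall S, C S -> pairing_code S) -> chain_s C ->
  pairing_code (union_s C).
Proof.
  intros [S0 C0] hC ch. split.
  - intro k; exists S0; split; auto; apply (pg_nat _ _ (hC S0 C0)).
  - intros x y z z' u1 u2. destruct (union_chain_two C _ _ ch u1 u2) as [S [CS [a b]]].
    apply (pg_fun _ _ (hC S CS) x y); auto.
  - intros x y u1 u2. destruct (union_chain_two C _ _ ch u1 u2) as [S [CS [a b]]].
    destruct (pg_total _ _ (hC S CS) x y a b) as [z hz]. exists z, S; auto.
  - intros x y z [S [CS h]].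
    destruct (pg_range _ _ (hC S CS) _ _ _ h) as [h1 [h2 h3]].
    split; [|split]; exists S; auto.
  - intros x y x' y' z u1 u2. destruct (union_chain_two C _ _ ch u1 u2) as [S [CS [a b]]].
    apply (pg_inj _ _ (hC S CS) x y x' y' z); auto.
Qed.

Definition merge (A : X -> Prop) (f : X -> X -> X) (k : X -> X) (x : X) : X :=
  if excluded_middle_informative (A x) then f (nu 0) x else f (nu 1) (k x).

Lemma merge_inj A B f k :
  pairing_on A f -> (forall x, B x -> A (k x)) ->
  (forall x y, B x -> B y -> k x = k y -> x = y) ->
  (forall x, A x \/ B x -> A (merge A f k x)) /\
  (forall x y, A x \/ B x -> A y \/ B y -> merge A f k x = merge A f k y -> x = y).
Proof.
  intros [f_nat [f_range f_inj]] k_range k_inj.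
  assert (onB : forall x, A x \/ B x -> ~ A x -> B x) by (intros x [h|h] n; tauto).
  unfold merge; split.
  - intros x hx. destruct (excluded_middle_informative (A x)); apply f_range; auto.
  - intros x y hx hy e.
    destruct (excluded_middle_informative (A x)) as [ax|ax];
    destruct (excluded_middle_informative (A y)) as [ay|ay];
    apply f_inj in e; auto; destruct e as [e1 e2];
    try (apply nu_inj in e1; discriminate); auto.
Qed.

(* If [A] embeds (by [j]) into its complement, the pairing extends to the
   strictly larger set [A] plus [j(A)]: pairs outside [A * A] are coded into
   [A * A] through [merge] and sent into the new copy [j(A)]. *)
Lemma extend_pairing A f j :
  pairing_on A f -> (forall x, A x -> ~ A (j x)) ->
  (forall x y, A x -> A y -> j x = j y -> x = y) ->
  exists A' f', pairing_on A' f' /\ (forall x, A x -> A' x) /\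
    (forall x y, A x -> A y -> f' x y = f x y) /\ exists x, A' x /\ ~ A x.
Proof.
  intros Hf j_out j_inj. pose proof Hf as [f_nat [f_range f_inj]].
  set (B := fun z => exists a, A a /\ z = j a).
  assert (B_out : forall z, B z -> ~ A z) by (intros z [a [ha e]]; subst; apply j_out; auto).
  destruct (choice (fun z a => B z -> A a /\ z = j a)) as [k hk].
  { intro z. destruct (classic (B z)) as [[a ha]|n]; [exists a; auto|exists z; tauto]. }
  destruct (merge_inj A B f k Hf) as [c_range c_inj].
  { intros z bz; apply (hk z bz). }
  { intros z w bz bw e. rewrite (proj2 (hk z bz)), (proj2 (hk w bw)), e; auto. }
  set (c := merge A f k) in *.
  set (g := fun x y => if excluded_middle_informative (A x /\ A y) then f x y
                       else j (f (c x) (c y))).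
  assert (cc_range : forall x y, A x \/ B x -> A y \/ B y -> A (f (c x) (c y)))
    by (intros; apply f_range; apply c_range; auto).
  exists (fun x => A x \/ B x), g. split; [split; [|split]|split; [|split]].
  - left; apply f_nat.
  - intros x y hx hy. unfold g.
    destruct (excluded_middle_informative _) as [[ax ay]|n]; [left; auto|right].
    exists (f (c x) (c y)); auto.
  - intros x y x' y' hx hy hx' hy' e. unfold g in e.
    destruct (excluded_middle_informative (A x /\ A y)) as [[ax ay]|n];
    destruct (excluded_middle_informative (A x' /\ A y')) as [[ax' ay']|n'].
    + apply f_inj; auto.
    + exfalso. apply (B_out (f x y)); [rewrite e; exists (f (c x') (c y')); auto|auto].
    + exfalso. apply (B_out (f x' y')); [rewrite <- e; exists (f (c x) (c y)); auto|auto].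
    + apply j_inj, f_inj in e; auto; try (apply c_range; auto).
      destruct e as [e1 e2]; split; apply c_inj; auto.
  - intros x ax; left; auto.
  - intros x y ax ay. unfold g. destruct (excluded_middle_informative _); tauto.
  - exists (j (nu 0)). split; [right; exists (nu 0); auto|apply j_out, f_nat].
Qed.

Lemma absorb_pairing A f k :
  pairing_on A f -> (forall x, ~ A x -> A (k x)) ->
  (forall x y, ~ A x -> ~ A y -> k x = k y -> x = y) ->
  exists pr : X -> X -> X, forall x y x' y', pr x y = pr x' y' -> x = x' /\ y = y'.
Proof.
  intros Hf k_range k_inj. pose proof Hf as [_ [_ f_inj]].
  destruct (merge_inj A (fun x => ~ A x) f k Hf k_range k_inj) as [c_range c_inj].
  assert (all : forall x, A x \/ ~ A x) by (intro; apply classic).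
  exists (fun x y => f (merge A f k x) (merge A f k y)).
  intros x y x' y' e. apply f_inj in e; auto. destruct e; split; apply c_inj; auto.
Qed.

(* The maximal pairing code cannot embed into its complement, so its
   complement embeds into it and [absorb_pairing] applies. *)
Theorem square_injection :
  exists pr : X -> X -> X, forall x y x' y', pr x y = pr x' y' -> x = x' /\ y = y'.
Proof.
  destruct (zorn_sets _ pairing_code nat_code nat_pairing_code pairing_code_chain)
    as [M [HM Mmax]].
  destruct (pairing_of_graph _ _ HM) as [f [Hf f_graph]].
  set (A := code_dom M).
  destruct (comparability X A (fun x => ~ A x)) as [[j [j_out j_inj]]|[k [k_range k_inj]]].
  - exfalso.
    destruct (extend_pairing A f j Hf j_out j_inj) as [A' [f' [Hf' [AA' [ff' [x [a'x nax]]]]]]].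
    apply nax, (Mmax (code A' (fun x y z => A' x /\ A' y /\ z = f' x y))).
    + apply graph_of_pairing; auto.
    + intros [[[x0 y0] z0]|x0] h; simpl; [|apply AA'; auto].
      destruct (pg_range _ _ HM _ _ _ h) as [ax [ay _]].
      rewrite ff', <- (f_graph _ _ _ h); auto.
    + exact a'x.
  - apply (absorb_pairing A f k Hf k_range k_inj).
Qed.
End InfiniteSquare.

(* A type that is not exhausted by any finite list receives an injection of
   the naturals: enumerate fresh elements one after another. *)
Section FreshSequence.
Variable X : Type.
Variable fresh : list X -> X.
Hypothesis fresh_new : forall l, ~ In (fresh l) l.

Fixpoint fresh_list (k : nat) : list X :=
  match k with 0 => nil | S k => fresh (fresh_list k) :: fresh_list k end.

Lemma fresh_list_in i k : i < k -> In (fresh (fresh_list i)) (fresh_list k).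
Proof.
  induction k as [|k IH]; intro h; [lia|]. simpl.
  destruct (Nat.eq_dec i k); [subst; left; auto|right; apply IH; lia].
Qed.

Lemma fresh_sequence_inj i j : fresh (fresh_list i) = fresh (fresh_list j) -> i = j.
Proof.
  intro e. destruct (lt_eq_lt_dec i j) as [[h|h]|h]; auto.
  - destruct (fresh_new (fresh_list j)). rewrite <- e; apply fresh_list_in; auto.
  - destruct (fresh_new (fresh_list i)). rewrite e; apply fresh_list_in; auto.
Qed.
End FreshSequence.

Lemma infinite_nat_injection (X : Type) :
  (forall l : list X, exists x, ~ In x l) ->
  exists nu : nat -> X, forall i j, nu i = nu j -> i = j.
Proof.
  intro nfin. destruct (choice (fun l x => ~ In x l) nfin) as [fresh fresh_new].
  exists (fun k => fresh (fresh_list X fresh k)). apply (fresh_sequence_inj X fresh fresh_new).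
Qed.

Lemma no_nat_injection_into_list (T : Type) (h : nat -> T) (s : list T) :
  (forall i j, h i = h j -> i = j) -> (forall k, In (h k) s) -> False.
Proof.
  intros h_inj h_in.
  assert (nd : NoDup (map h (seq 0 (length s + 1)))).
  { apply FinFun.Injective_map_NoDup; [intros a b; apply h_inj|apply seq_NoDup]. }
  apply NoDup_incl_length with (l' := s) in nd.
  - rewrite length_map, length_seq in nd; lia.
  - intros x hx. apply in_map_iff in hx. destruct hx as [k [e _]]; subst; auto.
Qed.

Fixpoint sublists {T : Type} (l : list T) : list (list T) :=
  match l with
  | nil => nil :: nil
  | x :: l => map (cons x) (sublists l) ++ sublists l
  end.

Lemma filter_in_sublists {T : Type} (f : T -> bool) l : In (filter f l) (sublists l).
Proof.
  induction l as [|x l IH]; simpl; [auto|]. apply in_app_iff.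
  destruct (f x); [left; apply in_map; auto|right; auto].
Qed.

Section ListCode.
Variable X : Type.
Variable nu : nat -> X.
Hypothesis nu_inj : forall i j, nu i = nu j -> i = j.
Variable pr : X -> X -> X.
Hypothesis pr_inj : forall x y x' y', pr x y = pr x' y' -> x = x' /\ y = y'.

Fixpoint nest (l : list X) : X :=
  match l with nil => nu 0 | x :: l => pr x (nest l) end.

Definition list_code (l : list X) : X := pr (nu (length l)) (nest l).

Lemma list_code_inj l1 l2 : list_code l1 = list_code l2 -> l1 = l2.
Proof.
  unfold list_code; intro e. apply pr_inj in e. destruct e as [e1 e2]. apply nu_inj in e1.
  revert l2 e1 e2; induction l1 as [|x l1 IH]; intros [|y l2] e1 e2; simpl in *;
    try discriminate; auto.
  apply pr_inj in e2. destruct e2; subst. f_equal. apply IH; auto.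
Qed.
End ListCode.

(* In an orthocomplemented modular lattice whose strict order is
   well-founded, every element is the join of finitely many minimal elements:
   below a nonzero [a] pick a minimal [p]; then [a] is [p] joined with the
   strictly smaller element [p^perp /\ a] (orthomodularity). *)
Section AtomicDecomposition.
Variable L : OLData.
Hypothesis HL : is_ortho_lattice L.

Lemma le_refl a : le L a a.
Proof. apply HL. Qed.
Lemma le_antisym a b : le L a b -> le L b a -> a = b.
Proof. apply HL. Qed.
Lemma le_trans a b c : le L a b -> le L b c -> le L a c.
Proof. apply HL. Qed.
Lemma meet_l a b : le L (meet L a b) a.
Proof. apply HL; auto. Qed.
Lemma meet_r a b : le L (meet L a b) b.
Proof. apply HL; auto. Qed.
Lemma meet_glb a b c : le L c a -> le L c b -> le L c (meet L a b).
Proof. intros; apply HL; intros x [e|e]; subst; auto. Qed.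
Lemma join_l a b : le L a (join L a b).
Proof. apply HL; auto. Qed.
Lemma join_r a b : le L b (join L a b).
Proof. apply HL; auto. Qed.
Lemma join_lub a b c : le L a c -> le L b c -> le L (join L a b) c.
Proof. intros; apply HL; intros x [e|e]; subst; auto. Qed.
Lemma bot_le a : le L (bot L) a.
Proof. apply HL; auto. Qed.
Lemma le_top a : le L a (top L).
Proof. apply HL; auto. Qed.

Lemma orthomodular p a : le L p a -> a = join L p (meet L (compl L p) a).
Proof.
  intro h. destruct HL as [_ [_ [_ [Hmod [_ [Hj _]]]]]].
  rewrite <- (Hmod p (compl L p) a h), Hj.
  apply le_antisym; [apply meet_glb; [apply le_top|apply le_refl]|apply meet_r].
Qed.

Fixpoint ljoin (l : list L) : L :=
  match l with nil => bot L | x :: l => join L x (ljoin l) end.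

Lemma ljoin_upper p l : In p l -> le L p (ljoin l).
Proof.
  induction l as [|x l IH]; simpl; [tauto|]. intros [e|h].
  - subst; apply join_l.
  - apply (le_trans _ _ _ (IH h)); apply join_r.
Qed.

Lemma ljoin_lub l b : (forall p, In p l -> le L p b) -> le L (ljoin l) b.
Proof.
  induction l as [|x l IH]; simpl; intro h; [apply bot_le|].
  apply join_lub; auto.
Qed.

Definition strictly_below (b a : L) : Prop := le L b a /\ b <> a.

Hypothesis below_wf : well_founded strictly_below.

(* Every nonzero element lies above a minimal element (well-founded descent
   through nonzero proper meets). *)
Lemma minimal_below a : a <> bot L -> exists p, minimal L p /\ le L p a.
Proof.
  induction a as [a IH] using (well_founded_ind below_wf). intro na.
  destruct (classic (minimal L a)) as [m|m]; [exists a; split; auto; apply le_refl|].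
  assert (exists l, meet L a l <> bot L /\ meet L a l <> a) as [l [h1 h2]].
  { apply NNPP; intro h; apply m; split; auto. intro l.
    destruct (classic (meet L a l = bot L)); auto. right. apply NNPP; intro h2.
    apply h; eauto. }
  destruct (IH (meet L a l) (conj (meet_l _ _) h2) h1) as [p [mp hp]].
  exists p; split; auto. apply (le_trans _ _ _ hp (meet_l _ _)).
Qed.

Lemma join_of_minimals a :
  exists l : list {m : L | minimal L m}, ljoin (map (@proj1_sig _ _) l) = a.
Proof.
  induction a as [a IH] using (well_founded_ind below_wf).
  destruct (classic (a = bot L)) as [e|na]; [exists nil; simpl; auto|].
  destruct (minimal_below a na) as [p [mp hp]].
  set (c := meet L (compl L p) a).
  assert (c_ne : c <> a).
  { intro e. apply (proj1 mp), le_antisym; [|apply bot_le].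
    destruct HL as [_ [_ [_ [_ [_ [_ [Hm _]]]]]]]. rewrite <- (Hm p).
    apply meet_glb; [apply le_refl|]. apply (le_trans _ _ _ hp). rewrite <- e. apply meet_l. }
  destruct (IH c (conj (meet_r _ _) c_ne)) as [l hl].
  exists (exist _ p mp :: l). simpl. rewrite hl. symmetry; apply orthomodular; auto.
Qed.

Lemma le_of_minimals a b :
  (forall p, minimal L p -> le L p a -> le L p b) -> le L a b.
Proof.
  intro h. destruct (join_of_minimals a) as [l hl]. subst a.
  apply ljoin_lub. intros p hp. apply h; [|apply ljoin_upper; auto].
  apply in_map_iff in hp. destruct hp as [[q mq] [e _]]. simpl in e; subst; auto.
Qed.

(* If [L] is infinite (contains a copy of the naturals), so is its set of
   minimal elements: with only the minimal elements in [xs], each element would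
   be determined by the sublist of [xs] below it. *)
Lemma minimals_infinite (emb : nat -> L) :
  (forall i j, emb i = emb j -> i = j) ->
  forall xs : list {m : L | minimal L m}, exists m, ~ In m xs.
Proof.
  intros emb_inj xs. apply NNPP; intro hno.
  assert (all : forall m, In m xs) by (intro m; apply NNPP; intro h; apply hno; eauto).
  set (below := fun a (p : {m : L | minimal L m}) =>
                  if excluded_middle_informative (le L (proj1_sig p) a) then true else false).
  assert (below_spec : forall a p, below a p = true <-> le L (proj1_sig p) a).
  { intros a p; unfold below; destruct (excluded_middle_informative _); split; auto; discriminate. }
  assert (trace_le : forall a b, filter (below a) xs = filter (below b) xs -> le L a b).
  { intros a b e. apply le_of_minimals. intros p mp hp.
    assert (hin : In (exist _ p mp) (filter (below a) xs)) by (apply filter_In; rewrite below_spec; auto).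
    rewrite e in hin. apply filter_In, proj2, below_spec in hin; exact hin. }
  apply (no_nat_injection_into_list _ (fun k => filter (below (emb k)) xs) (sublists xs)).
  - intros i j e. apply emb_inj, le_antisym; auto.
  - intro k; apply filter_in_sublists.
Qed.
End AtomicDecomposition.

(* In a lattice of type I_n the dimension function is strictly monotone
   (axiom (5) of a regular relation) and takes only the values k/n, so the
   strict order is well-founded. *)
Lemma dimension_strict (L : OLData) sim D a b :
  regular L sim -> dimension_function L sim D ->
  le L b a -> b <> a -> (D b < D a)%R.
Proof.
  intros Hreg HD h ne. destruct HD as [_ [_ [_ [_ [Heq [Hle _]]]]]].
  destruct Hreg as [Hrefl [_ [_ [_ [_ [_ [_ Hlast]]]]]]].
  assert (h1 : (D b <= D a)%R) by (apply Hle; exists b; split; auto).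
  destruct (Rle_lt_or_eq_dec _ _ h1) as [h2|h2]; auto.
  destruct ne. apply Hlast; auto. apply Heq; auto.
Qed.

(* Strict descent lowers the integer level k of D = k/n. *)
Lemma type_I_well_founded (L : OLData) n :
  (1 <= n)%nat -> type_I L n -> well_founded (strictly_below L).
Proof.
  intros hn [sim [D [Hreg [HD Hrange]]]].
  assert (n_pos : (0 < INR n)%R) by (apply lt_0_INR; lia).
  assert (level : forall a, exists k, D a = (INR k / INR n)%R).
  { intro a. destruct (proj1 (Hrange (D a)) (ex_intro _ a eq_refl)) as [k [_ e]]; eauto. }
  assert (acc : forall k a, D a = (INR k / INR n)%R -> Acc (strictly_below L) a).
  { intro k; induction k as [k IH] using lt_wf_ind. intros a ea. constructor.
    intros b [hb ne]. destruct (level b) as [kb eb]. apply (IH kb); auto.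
    pose proof (dimension_strict L sim D a b Hreg HD hb ne) as hlt.
    rewrite ea, eb in hlt. unfold Rdiv in hlt.
    apply INR_lt, (Rmult_lt_reg_r (/ INR n)); auto. apply Rinv_0_lt_compat; auto. }
  intro a; destruct (level a) as [k e]; eauto.
Qed.

Theorem mainTheorem5 (L : OLData) (n : nat) :
  (1 <= n)%nat -> factorial_W_lattice_type_I L n ->
  same_card {m : L | minimal L m} R.
Proof.
  intros hn [[HL [_ [_ HI]]] [phi [phi_inj phi_surj]]].
  pose proof (type_I_well_founded L n hn HI) as wf.
  destruct (choice (fun r a => phi a = r) phi_surj) as [psi psi_spec].
  assert (psi_inj : forall r s, psi r = psi s -> r = s)
    by (intros r s e; rewrite <- (psi_spec r), <- (psi_spec s), e; reflexivity).
  destruct (choice _ (join_of_minimals L HL wf)) as [dec dec_spec].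
  assert (atoms_infinite := minimals_infinite L HL wf (fun k => psi (INR k))
                              (fun i j e => INR_eq _ _ (psi_inj _ _ e))).
  destruct (infinite_nat_injection _ atoms_infinite) as [nu nu_inj].
  destruct (square_injection _ nu nu_inj) as [pr pr_inj].
  apply (cantor_bernstein _ _ (fun m => phi (proj1_sig m))
                              (fun r => list_code _ nu pr (dec (psi r)))).
  - intros [x hx] [y hy] e. apply phi_inj in e. simpl in e; subst.
    f_equal; apply proof_irrelevance.
  - intros r s e. apply list_code_inj in e; auto. apply psi_inj.
    rewrite <- (dec_spec (psi r)), <- (dec_spec (psi s)), e; reflexivity.
Qed.
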